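(* In the periodic setting below, let $0<d\le2$ and $t_0\in\mathbb R$. For any $u^0\in l^{\infty,+}$: if $u^0\le d\phi(t_0,\cdot)+d_1\phi_1(t_0,\cdot)$ (resp. $u^0\ge d\phi(t_0,\cdot)-d_1\phi_1(t_0,\cdot)$), then for $d_1/d$ sufficiently large, $u(t;t_0,u^0)\le d\phi(t,\cdot)+d_1\phi_1(t,\cdot)$ (resp. $u(t;t_0,u^0)\ge d\phi(t,\cdot)-d_1\phi_1(t,\cdot)$) for all $t\ge t_0$.
   Context: Periodic setting: equation (E) is $\dot u_j=d(t,j+1)(u_{j+1}-u_j)+d(t,j-1)(u_{j-1}-u_j)+u_jf(t,j,u_j)$, $j\in\mathbb Z$, with $d$ bounded, $\inf d>0$, $d(t+T,j)=d(t,j+J)=d(t,j)$, $f(t+T,j,u)=f(t,j+J,u)=f(t,j,u)$ ($T>0$, $J\in\mathbb Z^+$), and $f$ satisfying (H0): locally Hölder in $t$, Lipschitz in $u$, $C^1$ in $u$ for $u\ge0$, $f(t,j,u)=f(t,j,0)$ for $u\le0$, $f<0$ for $u\ge M_0$, $f_u<0$ for $u\ge0$, $\liminf_{t-s\to\infty}\frac1{t-s}\int_s^t\inf_jf(\tau,j,0)d\tau>0$. $u(t;s,u^0)$ is the solution of (E) with $u(s;s,u^0)=u^0$; $l^{\infty,+}$ is the set of bounded nonnegative sequences; inequalities between sequences are componentwise. For $\mu\in\mathbb R$, $\lambda(\mu)$ and $\psi^\mu(t,j)>0$ ($T$-periodic in $t$, $J$-periodic in $j$, $\|\psi^\mu(0,\cdot)\|_\infty=1$)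 are such that $e^{\lambda(\mu)t}\psi^\mu(t,j)$ solves $\dot v_j=d(t,j-1)(e^\mu v_{j-1}-v_j)+d(t,j+1)(e^{-\mu}v_{j+1}-v_j)+f(t,j,0)v_j$. $\mu^*>0$ minimizes $\lambda(\mu)/\mu$ over $\mu>0$, $c^*=\lambda(\mu^* )/\mu^*$. Fix $c>c^*$ and $0<\mu<\mu'<\min\{2\mu,\mu^*\}$ with $c=\lambda(\mu)/\mu$ and $\lambda(\mu)/\mu>\lambda(\mu')/\mu'>c^*$. Set $\phi(t,j)=e^{-\mu(j-ct)}\psi^\mu(t,j)$ and $\phi_1(t,j)=e^{-\mu'(j-ct)}\psi^{\mu'}(t,j)$. *)

From Stdlib Require Import Reals Lra Lia ZArith List.
Open Scope R_scope.

(* minimum of h over the indices 0..J-1 (J >= 1). With J-periodicity in j this is inf_j h j. *)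
Definition minj (J : Z) (h : Z -> R) : R :=
  fold_right Rmin (h 0%Z) (map (fun k => h (Z.of_nat k)) (seq 0 (Z.to_nat J))).

Definition rhsE (dd : R -> Z -> R) (f : R -> Z -> R -> R) (t : R) (v : Z -> R) (j : Z) : R :=
  dd t (j + 1)%Z * (v (j + 1)%Z - v j) + dd t (j - 1)%Z * (v (j - 1)%Z - v j)
  + v j * f t j (v j).

Definition rhsLin (dd : R -> Z -> R) (f : R -> Z -> R -> R) (mu t : R) (v : Z -> R) (j : Z) : R :=
  dd t (j - 1)%Z * (exp mu * v (j - 1)%Z - v j) + dd t (j + 1)%Z * (exp (- mu) * v (j + 1)%Z - v j)
  + f t j 0 * v j.

Definition linf_plus (u0 : Z -> R) : Prop :=
  (forall j, 0 <= u0 j) /\ exists B, forall j, u0 j <= B.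

Definition is_solution (dd : R -> Z -> R) (f : R -> Z -> R -> R) (t0 : R) (u0 : Z -> R)
  (u : R -> Z -> R) : Prop :=
  (forall j, u t0 j = u0 j) /\
  (forall t, t0 <= t -> exists B, forall s j, t0 <= s <= t -> Rabs (u s j) <= B) /\
  (forall j eps, 0 < eps -> exists delta, 0 < delta /\
       forall s, t0 <= s < t0 + delta -> Rabs (u s j - u0 j) < eps) /\
  (forall j t, t0 < t -> derivable_pt_lim (fun s => u s j) t (rhsE dd f t (u t) j)).

Definition periodic_setting (T : R) (J : Z) (dd : R -> Z -> R) (f : R -> Z -> R -> R) : Prop :=
  0 < T /\ (0 < J)%Z /\
  (exists B, forall t j, dd t j <= B) /\
  (exists delta, 0 < delta /\ forall t j, delta <= dd t j) /\
  (forall t j, dd (t + T) j = dd t j) /\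
  (forall t j, dd t (j + J)%Z = dd t j) /\
  (forall t j u, f (t + T) j u = f t j u) /\
  (forall t j u, f t (j + J)%Z u = f t j u) /\
  (forall j a b M, exists C alpha, 0 < alpha <= 1 /\
      forall t s u, a <= t <= b -> a <= s <= b -> Rabs u <= M ->
        Rabs (f t j u - f s j u) <= C * Rpower (Rabs (t - s)) alpha) /\
  (forall M, exists L, forall t j u v, Rabs u <= M -> Rabs v <= M ->
        Rabs (f t j u - f t j v) <= L * Rabs (u - v)) /\
  (exists fu : R -> Z -> R -> R,
      (forall t j u, 0 < u -> derivable_pt_lim (f t j) u (fu t j u)) /\
      (forall t j u, 0 <= u -> forall eps, 0 < eps -> exists delta, 0 < delta /\
          forall v, 0 <= v -> Rabs (v - u) < delta -> Rabs (fu t j v - fu t j u) < eps) /\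
      (forall t j u, 0 <= u -> fu t j u < 0)) /\
  (forall t j u, u <= 0 -> f t j u = f t j 0) /\
  (exists M0, 0 < M0 /\ forall t j u, M0 <= u -> f t j u < 0) /\
  (* liminf_{t-s -> oo} 1/(t-s) int_s^t inf_j f(tau,j,0) dtau > 0 *)
  (exists eps L, 0 < eps /\ forall s t, L <= t - s ->
      forall pr : Riemann_integrable (fun tau => minj J (fun j => f tau j 0)) s t,
        eps * (t - s) <= RiemannInt pr).

(* lam, psi give, for every mu, the principal eigen-data:
   e^{lam mu t} psi mu t j solves the linearized mu-equation, psi > 0, periodic,
   ||psi mu 0 .||_infty = 1. *)
Definition principal_data (T : R) (J : Z) (dd : R -> Z -> R) (f : R -> Z -> R -> R)
  (lam : R -> R) (psi : R -> R -> Z -> R) : Prop :=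
  forall mu,
    (forall t j, 0 < psi mu t j) /\
    (forall t j, psi mu (t + T) j = psi mu t j) /\
    (forall t j, psi mu t (j + J)%Z = psi mu t j) /\
    is_lub (fun x => exists j, x = Rabs (psi mu 0 j)) 1 /\
    (forall t j, derivable_pt_lim (fun s => exp (lam mu * s) * psi mu s j) t
        (rhsLin dd f mu t (fun k => exp (lam mu * t) * psi mu t k) j)).

Definition phi_of (lam : R -> R) (psi : R -> R -> Z -> R) (mu c t : R) (j : Z) : R :=
  exp (- mu * (IZR j - c * t)) * psi mu t j.

(* Both bounds come from a comparison principle for (E).  Since [f] is nonincreasing in [u],
   constant for [u <= 0] and bounded above by some [A], the map [x |-> x f(t,j,x)] is one-sided
   Lipschitz with constant [A]; hence the difference [w] of a supersolution and a subsolution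
   satisfies [w' >= D w + A w] wherever it is negative, and a minimum argument with the weight
   [e^{beta t} cosh j] shows that [w] stays nonnegative.

   [phi] solves the linearisation of (E) at [0] exactly (as [c = lam mu / mu]) and [phi1] with
   the extra growth [(mu' c - lam mu') phi1 > 0].  As [f(u) <= f(0)] for [u >= 0],
   [d phi + d1 phi1] is a supersolution.  Where [d phi - d1 phi1] is positive one must have
   [j - c t > 0] once [d1/d >= max psi^mu / min psi^mu'], so its square is
   [O(e^{-2 mu (j - c t)}) <= O(e^{-mu' (j - c t)})] because [mu' < 2 mu]; for [d1/d] large the
   Lipschitz defect [f(0) - f(u)] is then absorbed by [d1 (mu' c - lam mu') phi1], which makes
   [d phi - d1 phi1] a subsolution. *)

From Stdlib Require Import Reals Lra Lia ZArith.
Open Scope R_scope.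

Definition diffusion (dd : R -> Z -> R) (t : R) (v : Z -> R) (j : Z) : R :=
  dd t (j + 1)%Z * (v (j + 1)%Z - v j) + dd t (j - 1)%Z * (v (j - 1)%Z - v j).

Lemma rhsE_diffusion dd f t v j :
  rhsE dd f t v j = diffusion dd t v j + v j * f t j (v j).
Proof. unfold rhsE, diffusion; ring. Qed.

Lemma exp_le_compat x y : x <= y -> exp x <= exp y.
Proof. intros [Hlt | <-]; [left; apply exp_increasing, Hlt | lra]. Qed.

Lemma Rmult_le_of_le_div a b d : 0 < d -> a <= b / d -> a * d <= b.
Proof.
  intros Hd Hab. replace b with (b / d * d) by (field; lra).
  apply Rmult_le_compat_r; lra.
Qed.

Lemma derivable_pt_lim_exp_linear a x :
  derivable_pt_lim (fun s => exp (a * s)) x (a * exp (a * x)).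
Proof.
  replace (a * exp (a * x)) with (exp (a * x) * (a * 1)) by ring.
  apply (derivable_pt_lim_comp (fun s => a * s) exp).
  - apply (derivable_pt_lim_scal id), derivable_pt_lim_id.
  - apply derivable_pt_lim_exp.
Qed.

Lemma continuity_pt_Rmax_l t0 x : continuity_pt (fun s => Rmax t0 s) x.
Proof.
  intros eps Heps. exists eps; split; [exact Heps|].
  intros y [_ Hy]; simpl in *; unfold Rdist in *.
  unfold Rmax; destruct (Rle_dec t0 y), (Rle_dec t0 x);
    revert Hy; unfold Rabs; repeat destruct Rcase_abs; lra.
Qed.

Lemma continuity_pt_Rmax_of_right_continuous (g : R -> R) t0 :
  (forall eps, 0 < eps -> exists delta, 0 < delta /\
     forall s, t0 <= s < t0 + delta -> Rabs (g s - g t0) < eps) ->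
  continuity_pt (fun s => g (Rmax t0 s)) t0.
Proof.
  intros Hg eps Heps. destruct (Hg eps Heps) as [delta [Hdelta Hs]].
  exists delta; split; [exact Hdelta|].
  intros y [_ Hy]; simpl in *; unfold Rdist in *.
  rewrite (Rmax_left t0 t0) by lra. unfold Rmax at 1. destruct (Rle_dec t0 y).
  - apply Hs. revert Hy; unfold Rabs; destruct Rcase_abs; lra.
  - rewrite Rminus_diag, Rabs_R0; lra.
Qed.

Lemma continuity_pt_Rmax_of_continuous (g : R -> R) t0 c :
  t0 <= c -> continuity_pt g c -> continuity_pt (fun s => g (Rmax t0 s)) c.
Proof.
  intros Hc Hg. apply (continuity_pt_comp (fun s => Rmax t0 s) g).
  - apply continuity_pt_Rmax_l.
  - rewrite Rmax_right by exact Hc. exact Hg.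
Qed.

Lemma continuity_pt_Rmax_on (g : R -> R) t0 c :
  t0 <= c -> continuity_pt (fun s => g (Rmax t0 s)) t0 ->
  (forall t, t0 < t -> continuity_pt g t) ->
  continuity_pt (fun s => g (Rmax t0 s)) c.
Proof.
  intros [Hlt | <-] Hc0 Hg; [|exact Hc0].
  apply continuity_pt_Rmax_of_continuous; [lra | exact (Hg c Hlt)].
Qed.

Lemma derivable_pt_lim_nonpos_at_left_min (g : R -> R) (a t l : R) :
  a < t -> derivable_pt_lim g t l -> (forall s, a <= s < t -> g t <= g s) -> l <= 0.
Proof.
  intros Hat Hd Hmin. destruct (Rle_lt_dec l 0) as [|Hl]; [assumption | exfalso].
  destruct (Hd (l / 2)) as [del Hdel]; [lra|].
  pose proof (cond_pos del) as Hdel0.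
  set (r := Rmin (del / 2) ((t - a) / 2)).
  assert (Hr : 0 < r) by (apply Rmin_pos; lra).
  assert (Hr1 : r <= del / 2) by apply Rmin_l.
  assert (Hr2 : r <= (t - a) / 2) by apply Rmin_r.
  specialize (Hdel (- r) ltac:(lra) ltac:(rewrite Rabs_Ropp, Rabs_right; lra)).
  set (q := (g (t + - r) - g t) / - r) in *.
  assert (Hq : g (t + - r) - g t = q * - r) by (unfold q; field; lra).
  assert (q > l / 2) by (revert Hdel; unfold Rabs; destruct Rcase_abs; lra).
  assert (g t <= g (t + - r)) by (apply Hmin; lra).
  nra.
Qed.

Lemma finite_block_min_attained (z : R -> Z -> R) (t0 T1 : R) :
  t0 <= T1 -> (forall k c, t0 <= c <= T1 -> continuity_pt (fun s => z s k) c) ->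
  forall (n : nat) (a : Z), exists k ts, (a <= k <= a + Z.of_nat n)%Z /\ t0 <= ts <= T1 /\
    forall j s, (a <= j <= a + Z.of_nat n)%Z -> t0 <= s <= T1 -> z ts k <= z s j.
Proof.
  intros Hle Hc. induction n as [|n IH]; intros a.
  - destruct (continuity_ab_min (fun s => z s a) t0 T1 Hle (Hc a)) as [m [Hm Hmr]].
    exists a, m. repeat split; try lia; try lra.
    intros j s Hj Hs. replace j with a by lia. exact (Hm s Hs).
  - destruct (IH a) as [k [ts [Hk [Hts Hmin]]]].
    set (b := (a + Z.of_nat (S n))%Z).
    destruct (continuity_ab_min (fun s => z s b) t0 T1 Hle (Hc b)) as [m [Hm Hmr]].
    destruct (Rle_dec (z ts k) (z m b)) as [Hkb|Hkb].
    + exists k, ts. split; [lia|]. split; [exact Hts|].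
      intros j s Hj Hs. destruct (Z.eq_dec j b) as [->|Hne].
      * exact (Rle_trans _ _ _ Hkb (Hm s Hs)).
      * apply Hmin; [unfold b in Hne; lia | exact Hs].
    + exists b, m. split; [unfold b; lia|]. split; [exact Hmr|].
      intros j s Hj Hs. destruct (Z.eq_dec j b) as [->|Hne].
      * exact (Hm s Hs).
      * specialize (Hmin j s ltac:(unfold b in Hne; lia) Hs). lra.
Qed.

Lemma global_min_attained (z : R -> Z -> R) (t0 T1 ta : R) (ja : Z) (N : nat) :
  t0 <= ta <= T1 -> z ta ja <= 0 ->
  (forall k c, t0 <= c <= T1 -> continuity_pt (fun s => z (Rmax t0 s) k) c) ->
  (forall s k, t0 <= s <= T1 -> (Z.of_nat N < Z.abs k)%Z -> 0 < z s k) ->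
  exists ts k, t0 <= ts <= T1 /\ forall s j, t0 <= s <= T1 -> z ts k <= z s j.
Proof.
  intros Hta Hza Hc Hfar.
  destruct (finite_block_min_attained (fun s k => z (Rmax t0 s) k) t0 T1 ltac:(lra) Hc
              (2 * N) (- Z.of_nat N)) as [k [ts [_ [Hts Hmin]]]].
  assert (Hblock : forall s j, t0 <= s <= T1 -> (Z.abs j <= Z.of_nat N)%Z ->
                     z (Rmax t0 ts) k <= z s j).
  { intros s j Hs Hj. rewrite <- (Rmax_right t0 s) by lra. apply Hmin; [lia | exact Hs]. }
  rewrite Rmax_right in Hblock by lra.
  exists ts, k. split; [exact Hts|]. intros s j Hs.
  destruct (Z_le_gt_dec (Z.abs j) (Z.of_nat N)) as [Hj|Hj]; [exact (Hblock s j Hs Hj)|].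
  assert (Hja : (Z.abs ja <= Z.of_nat N)%Z).
  { destruct (Z_le_gt_dec (Z.abs ja) (Z.of_nat N)) as [|Hja]; [assumption|].
    specialize (Hfar ta ja Hta ltac:(lia)). lra. }
  specialize (Hblock ta ja Hta Hja). specialize (Hfar s j Hs ltac:(lia)). lra.
Qed.

Definition cosh_weight (beta s : R) (k : Z) : R :=
  exp (beta * s) * (exp (IZR k) + exp (- IZR k)).

Lemma cosh_weight_pos beta s k : 0 < cosh_weight beta s k.
Proof.
  unfold cosh_weight. pose proof (exp_pos (beta * s)).
  pose proof (exp_pos (IZR k)). pose proof (exp_pos (- IZR k)). nra.
Qed.

Lemma derivable_pt_lim_cosh_weight beta k s :
  derivable_pt_lim (fun r => cosh_weight beta r k) s (beta * cosh_weight beta s k).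
Proof.
  unfold cosh_weight. rewrite <- Rmult_assoc.
  apply (derivable_pt_lim_scal_right (fun r => exp (beta * r))), derivable_pt_lim_exp_linear.
Qed.

Lemma cosh_shift_le x :
  exp (x + 1) + exp (- (x + 1)) <= 3 * (exp x + exp (- x)) /\
  exp (x - 1) + exp (- (x - 1)) <= 3 * (exp x + exp (- x)).
Proof.
  pose proof exp_le_3. pose proof (exp_ineq1_le 1).
  assert (exp (-1) <= 1) by (rewrite <- exp_0; apply exp_le_compat; lra).
  pose proof (exp_pos (-1)). pose proof (exp_pos x). pose proof (exp_pos (- x)).
  replace (- (x + 1)) with (- x + -1) by ring. replace (x - 1) with (x + -1) by ring.
  replace (- (x + -1)) with (- x + 1) by ring.
  rewrite !exp_plus. split; nra.
Qed.

Lemma cosh_weight_ge beta t0 s k : 0 <= beta -> t0 <= s ->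
  exp (beta * t0) * (1 + Rabs (IZR k)) <= cosh_weight beta s k.
Proof.
  intros Hbeta Hs. unfold cosh_weight.
  pose proof (exp_ineq1_le (IZR k)). pose proof (exp_ineq1_le (- IZR k)).
  pose proof (exp_pos (IZR k)). pose proof (exp_pos (- IZR k)).
  apply Rmult_le_compat; [left; apply exp_pos | pose proof (Rabs_pos (IZR k)); lra
    | apply exp_le_compat; nra | unfold Rabs; destruct Rcase_abs; lra].
Qed.

Lemma cosh_weight_dominates (w : R -> Z -> R) t0 T1 C beta eps :
  0 <= beta -> 0 < eps -> (forall t j, t0 <= t <= T1 -> - C <= w t j) ->
  exists N : nat, forall s k, t0 <= s <= T1 -> (Z.of_nat N < Z.abs k)%Z ->
    0 < w s k + eps * cosh_weight beta s k.
Proof.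
  intros Hbeta Heps Hlb.
  set (E0 := eps * exp (beta * t0)).
  assert (HE0 : 0 < E0) by (unfold E0; pose proof (exp_pos (beta * t0)); nra).
  exists (Z.to_nat (up (C / E0))). intros s k Hs Hk.
  destruct (archimed (C / E0)) as [Hup _].
  assert (Hk' : C / E0 < Rabs (IZR k)).
  { rewrite <- abs_IZR. apply Rlt_le_trans with (IZR (up (C / E0))); [exact Hup|].
    apply IZR_le. lia. }
  assert (HC : C < E0 * (1 + Rabs (IZR k))).
  { replace C with (E0 * (C / E0)) by (field; lra). nra. }
  pose proof (cosh_weight_ge beta t0 s k Hbeta (proj1 Hs)).
  specialize (Hlb s k Hs). unfold E0 in HC. nra.
Qed.

Section Comparison.
Variables (dd : R -> Z -> R) (Dmax : R).
Hypothesis dd_bounds : forall t j, 0 <= dd t j <= Dmax.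

Lemma diffusion_nonneg_at_min t (v : Z -> R) k :
  (forall j, v k <= v j) -> 0 <= diffusion dd t v k.
Proof.
  intros Hmin. unfold diffusion.
  pose proof (Hmin (k + 1)%Z). pose proof (Hmin (k - 1)%Z).
  destruct (dd_bounds t (k + 1)%Z), (dd_bounds t (k - 1)%Z).
  apply Rplus_le_le_0_compat; apply Rmult_le_pos; lra.
Qed.

Lemma diffusion_cosh_weight_le beta s k :
  diffusion dd s (cosh_weight beta s) k <= 4 * Dmax * cosh_weight beta s k.
Proof.
  unfold diffusion, cosh_weight. rewrite plus_IZR, minus_IZR.
  destruct (cosh_shift_le (IZR k)) as [Hup Hdown].
  pose proof (exp_pos (beta * s)). pose proof (exp_pos (IZR k)). pose proof (exp_pos (- IZR k)).
  destruct (dd_bounds s (k + 1)%Z), (dd_bounds s (k - 1)%Z).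
  set (X := exp (IZR k) + exp (- IZR k)) in *.
  set (Y := exp (beta * s)) in *.
  set (Xu := exp (IZR k + 1) + exp (- (IZR k + 1))) in *.
  set (Xd := exp (IZR k - 1) + exp (- (IZR k - 1))) in *.
  assert (HX : 0 < X) by (unfold X; lra).
  assert (Hu : Y * Xu - Y * X <= 2 * Y * X) by nra.
  assert (Hd : Y * Xd - Y * X <= 2 * Y * X) by nra.
  assert (dd s (k + 1)%Z * (Y * Xu - Y * X) <= Dmax * (2 * Y * X)).
  { apply Rle_trans with (dd s (k + 1)%Z * (2 * Y * X));
      [apply Rmult_le_compat_l | apply Rmult_le_compat_r]; nra. }
  assert (dd s (k - 1)%Z * (Y * Xd - Y * X) <= Dmax * (2 * Y * X)).
  { apply Rle_trans with (dd s (k - 1)%Z * (2 * Y * X));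
      [apply Rmult_le_compat_l | apply Rmult_le_compat_r]; nra. }
  lra.
Qed.

(* Perturbing a negative value by [eps * cosh_weight (4 Dmax + 1)] makes the infimum
   over [[t0, t]] x Z a minimum, attained away from [t0], where the time derivative is
   nonpositive while the diffusion of the weight is beaten by its growth rate. *)
Lemma comparison_principle_no_reaction t0 (w : R -> Z -> R) :
  (forall j, 0 <= w t0 j) ->
  (forall T1, exists C, forall t j, t0 <= t <= T1 -> - C <= w t j) ->
  (forall j, continuity_pt (fun s => w (Rmax t0 s) j) t0) ->
  (forall j t, t0 < t -> exists l, derivable_pt_lim (fun s => w s j) t l /\
     (w t j < 0 -> diffusion dd t (w t) j <= l)) ->
  forall t j, t0 <= t -> 0 <= w t j.
Proof.
  intros Hw0 Hlb Hc0 Hder ta ja Hta.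
  destruct (Rle_lt_dec 0 (w ta ja)) as [|Hneg]; [assumption | exfalso].
  destruct (Hlb ta) as [C HC].
  assert (HD : 0 <= Dmax) by (destruct (dd_bounds 0 0%Z); lra).
  set (beta := 4 * Dmax + 1).
  pose proof (cosh_weight_pos beta) as Hh.
  set (h := cosh_weight beta) in Hh |- *.
  set (eps := - w ta ja / (2 * h ta ja)).
  assert (Heps : 0 < eps) by (unfold eps; specialize (Hh ta ja); apply Rdiv_lt_0_compat; lra).
  set (z := fun s k => w s k + eps * h s k).
  assert (Hza : z ta ja < 0).
  { assert (eps * h ta ja = - w ta ja / 2) by (unfold eps; specialize (Hh ta ja); field; lra).
    unfold z; lra. }
  destruct (cosh_weight_dominates w t0 ta C beta eps ltac:(unfold beta; lra) Heps HC)
    as [N HN].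
  assert (Hzc : forall k c, t0 <= c <= ta -> continuity_pt (fun s => z (Rmax t0 s) k) c).
  { intros k c Hc. apply (continuity_pt_Rmax_on (fun s => z s k)); [lra| |].
    - apply (continuity_pt_plus (fun s => w (Rmax t0 s) k) (fun s => eps * h (Rmax t0 s) k));
        [apply Hc0|].
      apply (continuity_pt_Rmax_of_continuous (fun s => eps * h s k)); [lra|].
      apply continuity_pt_scal, derivable_continuous_pt.
      eexists; apply derivable_pt_lim_cosh_weight.
    - intros t Ht. destruct (Hder k t Ht) as [l [Hl _]].
      apply derivable_continuous_pt. eexists.
      apply (derivable_pt_lim_plus (fun s => w s k) (fun s => eps * h s k)); [exact Hl|].
      apply derivable_pt_lim_scal, derivable_pt_lim_cosh_weight. }
  destruct (global_min_attained z t0 ta ta ja N ltac:(lra) ltac:(lra) Hzc HN)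
    as [ts [k [Hts Hmin]]].
  assert (Hzk : z ts k < 0) by (specialize (Hmin ta ja ltac:(lra)); lra).
  assert (Hts0 : t0 < ts).
  { destruct (proj1 Hts) as [|Heq]; [assumption|]. subst ts.
    unfold z in Hzk. specialize (Hw0 k). specialize (Hh t0 k). nra. }
  assert (Hwk : w ts k < 0) by (unfold z in Hzk; specialize (Hh ts k); nra).
  destruct (Hder k ts Hts0) as [l [Hl Hdiff]]. specialize (Hdiff Hwk).
  assert (Hdz : l + eps * (beta * h ts k) <= 0).
  { apply (derivable_pt_lim_nonpos_at_left_min (fun s => z s k) t0 ts); [exact Hts0| |].
    - apply (derivable_pt_lim_plus (fun s => w s k) (fun s => eps * h s k)); [exact Hl|].
      apply derivable_pt_lim_scal, derivable_pt_lim_cosh_weight.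
    - intros s Hs. apply Hmin. lra. }
  assert (Hdiffz : 0 <= diffusion dd ts (z ts) k)
    by (apply diffusion_nonneg_at_min; intros j; apply Hmin; exact Hts).
  assert (Hsplit : diffusion dd ts (z ts) k
                   = diffusion dd ts (w ts) k + eps * diffusion dd ts (h ts) k)
    by (unfold diffusion, z; ring).
  pose proof (diffusion_cosh_weight_le beta ts k) as Hdh. fold h in Hdh.
  specialize (Hh ts k). fold h in Hh.
  assert (eps * diffusion dd ts (h ts) k <= eps * (4 * Dmax * h ts k))
    by (apply Rmult_le_compat_l; lra).
  unfold beta in Hdz. nra.
Qed.

Lemma comparison_principle A t0 (w : R -> Z -> R) :
  0 <= A -> (forall j, 0 <= w t0 j) ->
  (forall T1, exists C, forall t j, t0 <= t <= T1 -> - C <= w t j) ->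
  (forall j, continuity_pt (fun s => w (Rmax t0 s) j) t0) ->
  (forall j t, t0 < t -> exists l, derivable_pt_lim (fun s => w s j) t l /\
     (w t j < 0 -> diffusion dd t (w t) j + A * w t j <= l)) ->
  forall t j, t0 <= t -> 0 <= w t j.
Proof.
  intros HA Hw0 Hlb Hc0 Hder t j Ht.
  set (e := fun s => exp (- A * s)).
  assert (He : forall s, 0 < e s) by (intros; apply exp_pos).
  enough (0 <= e t * w t j) by (specialize (He t); nra).
  apply (comparison_principle_no_reaction t0 (fun s k => e s * w s k)); [| | | | exact Ht].
  - intros k. specialize (Hw0 k). specialize (He t0). nra.
  - intros T1. destruct (Hlb T1) as [C HC]. exists (Rabs C * e t0).
    intros s k Hs. specialize (HC s k Hs).
    assert (e s <= e t0) by (apply exp_le_compat; nra).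
    pose proof (He s). pose proof (Rle_abs C). pose proof (Rabs_pos C). nra.
  - intros k. apply (continuity_pt_mult (fun s => e (Rmax t0 s)) (fun s => w (Rmax t0 s) k));
      [|apply Hc0].
    apply (continuity_pt_Rmax_of_continuous e); [lra|].
    apply derivable_continuous_pt. eexists; apply derivable_pt_lim_exp_linear.
  - intros k s Hs. destruct (Hder k s Hs) as [l [Hl Hineq]].
    exists (- A * e s * w s k + e s * l). split.
    + apply (derivable_pt_lim_mult e (fun r => w r k)); [apply derivable_pt_lim_exp_linear
        | exact Hl].
    + intros Hneg. pose proof (He s).
      assert (Hwneg : w s k < 0) by nra.
      specialize (Hineq Hwneg).
      replace (diffusion dd s (fun k0 => e s * w s k0) k) with (e s * diffusion dd s (w s) k)
        by (unfold diffusion; ring).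
      nra.
Qed.

End Comparison.

Section Reaction.
Variables (f fu : R -> Z -> R -> R).
Hypothesis f_lipschitz : forall M, exists L, forall t j u v, Rabs u <= M -> Rabs v <= M ->
  Rabs (f t j u - f t j v) <= L * Rabs (u - v).
Hypothesis f_derivative : forall t j u, 0 < u -> derivable_pt_lim (f t j) u (fu t j u).
Hypothesis fu_neg : forall t j u, 0 <= u -> fu t j u < 0.
Hypothesis f_flat : forall t j u, u <= 0 -> f t j u = f t j 0.

Lemma reaction_decreasing_pos t j a b : 0 < a -> a < b -> f t j b < f t j a.
Proof.
  intros Ha Hab. destruct (MVT_cor2 (f t j) (fu t j) a b Hab) as [c [Hc Hcr]].
  - intros c Hc. apply f_derivative. lra.
  - assert (fu t j c < 0) by (apply fu_neg; lra). nra.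
Qed.

(* [f t j] is only known to decrease on [(0, oo)]; comparing with [0] uses continuity at [0]. *)
Lemma reaction_le_at_zero t j x : 0 < x -> f t j x <= f t j 0.
Proof.
  intros Hx. destruct (Rle_lt_dec (f t j x) (f t j 0)) as [|Hc]; [assumption | exfalso].
  destruct (f_lipschitz x) as [L HL].
  assert (HLp : 0 < Rabs L + 1) by (pose proof (Rabs_pos L); lra).
  set (a := Rmin (x / 2) ((f t j x - f t j 0) / (2 * (Rabs L + 1)))).
  assert (Ha : 0 < a) by (apply Rmin_pos; [lra | apply Rdiv_lt_0_compat; lra]).
  assert (Ha1 : a <= x / 2) by apply Rmin_l.
  assert (Ha2 : (Rabs L + 1) * a <= (f t j x - f t j 0) / 2).
  { apply Rle_trans with ((Rabs L + 1) * ((f t j x - f t j 0) / (2 * (Rabs L + 1)))).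
    - apply Rmult_le_compat_l; [lra | apply Rmin_r].
    - right; field; lra. }
  assert (Hxa : f t j x < f t j a) by (apply reaction_decreasing_pos; lra).
  specialize (HL t j a 0 ltac:(rewrite Rabs_right; lra) ltac:(rewrite Rabs_R0; lra)).
  rewrite Rminus_0_r, (Rabs_right a) in HL by lra.
  pose proof (Rle_abs (f t j a - f t j 0)). pose proof (Rle_abs L).
  assert (L * a <= (Rabs L + 1) * a) by nra.
  lra.
Qed.

Lemma reaction_antitone t j x y : x <= y -> f t j y <= f t j x.
Proof.
  intros Hxy. destruct (Rle_lt_dec y 0).
  - rewrite (f_flat t j y), (f_flat t j x) by lra. lra.
  - destruct (Rle_lt_dec x 0).
    + rewrite (f_flat t j x) by lra. apply reaction_le_at_zero. assumption.
    + destruct Hxy as [Hlt | ->]; [left; apply reaction_decreasing_pos; lra | lra].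
Qed.

Lemma reaction_upper_bound M0 : 0 < M0 -> (forall t j u, M0 <= u -> f t j u < 0) ->
  exists A, 0 <= A /\ forall t j x, f t j x <= A.
Proof.
  intros HM0 Hneg. destruct (f_lipschitz M0) as [L HL].
  exists (Rabs L * M0). split; [pose proof (Rabs_pos L); nra|].
  intros t j x. apply Rle_trans with (f t j 0).
  { destruct (Rle_lt_dec x 0); [rewrite f_flat; lra | apply reaction_le_at_zero; lra]. }
  specialize (HL t j 0 M0 ltac:(rewrite Rabs_R0; lra) ltac:(rewrite Rabs_right; lra)).
  rewrite Rminus_0_l, Rabs_Ropp, (Rabs_right M0) in HL by lra.
  specialize (Hneg t j M0 (Rle_refl _)).
  pose proof (Rle_abs (f t j 0 - f t j M0)). pose proof (Rle_abs L). nra.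
Qed.

(* The map [x |-> x * f t j x - A * x] is antitone: split the increment at whichever
   of [x], [y] has the sign that makes the cross term nonpositive. *)
Lemma reaction_one_sided_lipschitz A t j x y :
  (forall x, f t j x <= A) -> x <= y -> y * f t j y - x * f t j x <= A * (y - x).
Proof.
  intros HA Hxy. pose proof (reaction_antitone t j x y Hxy).
  pose proof (HA x). pose proof (HA y).
  destruct (Rle_lt_dec 0 x).
  - assert (x * (f t j y - f t j x) <= 0) by nra. nra.
  - destruct (Rle_lt_dec y 0).
    + rewrite (f_flat t j y), (f_flat t j x) in * by lra. nra.
    + assert (y * (f t j y - f t j x) <= 0) by nra. nra.
Qed.

End Reaction.

(* Right continuity at [t0] is encoded as continuity at [t0] of [s |-> U (Rmax t0 s) j],
   the form in which [continuity_ab_min] can be applied on [[t0, T1]]. *)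
Definition is_supersolution (dd : R -> Z -> R) (f : R -> Z -> R -> R) (t0 : R)
  (U : R -> Z -> R) : Prop :=
  (forall j, continuity_pt (fun s => U (Rmax t0 s) j) t0) /\
  (forall j t, t0 < t -> exists l, derivable_pt_lim (fun s => U s j) t l /\
     rhsE dd f t (U t) j <= l).

Definition is_subsolution (dd : R -> Z -> R) (f : R -> Z -> R -> R) (t0 : R)
  (V : R -> Z -> R) : Prop :=
  (forall j, continuity_pt (fun s => V (Rmax t0 s) j) t0) /\
  (forall j t, t0 < t -> exists l, derivable_pt_lim (fun s => V s j) t l /\
     l <= rhsE dd f t (V t) j).

Section SolutionComparison.
Variables (dd : R -> Z -> R) (Dmax : R) (f : R -> Z -> R -> R) (A : R).
Hypothesis dd_bounds : forall t j, 0 <= dd t j <= Dmax.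
Hypothesis A_nonneg : 0 <= A.
Hypothesis reaction_osl :
  forall t j x y, x <= y -> y * f t j y - x * f t j x <= A * (y - x).

Lemma super_sub_comparison t0 (U V : R -> Z -> R) :
  is_supersolution dd f t0 U -> is_subsolution dd f t0 V ->
  (forall j, V t0 j <= U t0 j) ->
  (forall T1, exists C, forall t j, t0 <= t <= T1 -> V t j - C <= U t j) ->
  forall t j, t0 <= t -> V t j <= U t j.
Proof.
  intros [HcU HdU] [HcV HdV] H0 Hlb t j Ht.
  enough (0 <= U t j - V t j) by lra.
  apply (comparison_principle dd Dmax dd_bounds A t0 (fun s k => U s k - V s k));
    [exact A_nonneg | | | | | exact Ht].
  - intros k. specialize (H0 k). lra.
  - intros T1. destruct (Hlb T1) as [C HC]. exists C. intros s k Hs.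
    specialize (HC s k Hs). lra.
  - intros k. exact (continuity_pt_minus _ _ _ (HcU k) (HcV k)).
  - intros k s Hs. destruct (HdU k s Hs) as [lU [HU HlU]], (HdV k s Hs) as [lV [HV HlV]].
    exists (lU - lV). split; [exact (derivable_pt_lim_minus _ _ _ _ _ HU HV)|].
    intros Hneg. rewrite rhsE_diffusion in HlU, HlV.
    replace (diffusion dd s (fun k0 => U s k0 - V s k0) k)
      with (diffusion dd s (U s) k - diffusion dd s (V s) k) by (unfold diffusion; ring).
    pose proof (reaction_osl s k (U s k) (V s k) ltac:(lra)). lra.
Qed.

End SolutionComparison.

Lemma is_solution_super_sub dd f t0 u0 u :
  is_solution dd f t0 u0 u -> is_supersolution dd f t0 u /\ is_subsolution dd f t0 u.
Proof.
  intros [Hinit [_ [Hrc Hder]]].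
  assert (Hc : forall j, continuity_pt (fun s => u (Rmax t0 s) j) t0).
  { intros j. apply (continuity_pt_Rmax_of_right_continuous (fun s => u s j)).
    rewrite Hinit. apply Hrc. }
  split; split; [exact Hc | | exact Hc |];
    intros j t Ht; exists (rhsE dd f t (u t) j); split; auto using Rle_refl.
Qed.

Lemma is_solution_locally_bounded dd f t0 u0 u : is_solution dd f t0 u0 u ->
  forall T1, exists B, forall t j, t0 <= t <= T1 -> Rabs (u t j) <= B.
Proof.
  intros [_ [Hbd _]] T1. destruct (Rle_lt_dec t0 T1) as [HT1|HT1].
  - destruct (Hbd T1 HT1) as [B HB]. exists B. intros t j Ht. apply HB. exact Ht.
  - exists 0. intros t j Ht. lra.
Qed.

Section PeriodicBounds.
Variables (T : R) (J : Z) (g : R -> Z -> R).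
Hypothesis T_pos : 0 < T.
Hypothesis J_pos : (0 < J)%Z.
Hypothesis g_periodic_t : forall t j, g (t + T) j = g t j.
Hypothesis g_periodic_j : forall t j, g t (j + J)%Z = g t j.
Hypothesis g_continuous : forall t j, continuity_pt (fun s => g s j) t.

Lemma periodic_t_shift (n : Z) t j : g (t + IZR n * T) j = g t j.
Proof.
  assert (Hnat : forall (m : nat) s, g (s + INR m * T) j = g s j).
  { induction m as [|m IH]; intros s; [rewrite Rmult_0_l, Rplus_0_r; reflexivity|].
    rewrite S_INR, <- (IH s), <- (g_periodic_t (s + INR m * T)). f_equal; ring. }
  destruct (Z_le_gt_dec 0 n).
  - rewrite <- (Z2Nat.id n), <- INR_IZR_INZ by assumption. apply Hnat.
  - rewrite <- (Hnat (Z.to_nat (- n)) (t + IZR n * T)), INR_IZR_INZ, Z2Nat.id by lia.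
    rewrite opp_IZR. f_equal; ring.
Qed.

Lemma periodic_j_shift (n : Z) t j : g t (j + n * J)%Z = g t j.
Proof.
  assert (Hnat : forall (m : nat) k, g t (k + Z.of_nat m * J)%Z = g t k).
  { induction m as [|m IH]; intros k; [f_equal; lia|].
    rewrite <- (IH k), <- (g_periodic_j t (k + Z.of_nat m * J)). f_equal; lia. }
  destruct (Z_le_gt_dec 0 n).
  - rewrite <- (Z2Nat.id n) by assumption. apply Hnat.
  - rewrite <- (Hnat (Z.to_nat (- n)) (j + n * J)%Z). f_equal; lia.
Qed.

Lemma periodic_reduce t j :
  exists t' j', 0 <= t' <= T /\ (0 <= j' < J)%Z /\ g t j = g t' j'.
Proof.
  destruct (archimed (t / T)) as [Hup1 Hup2].
  set (n := (up (t / T) - 1)%Z).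
  assert (Hn : IZR n = IZR (up (t / T)) - 1) by (unfold n; rewrite minus_IZR; reflexivity).
  assert (Ht : t = t / T * T) by (field; lra).
  exists (t - IZR n * T), (j mod J)%Z. split; [|split].
  - rewrite Hn. set (q := t / T) in *. rewrite Ht. split; nra.
  - apply Z.mod_pos_bound, J_pos.
  - rewrite <- (periodic_j_shift (j / J) (t - IZR n * T) (j mod J)),
      <- (periodic_t_shift n (t - IZR n * T)).
    f_equal; [ring | pose proof (Z.div_mod j J ltac:(lia)); lia].
Qed.

Lemma periodic_bounds_attained :
  exists tm jm tM jM, forall t j, g tm jm <= g t j <= g tM jM.
Proof.
  destruct (finite_block_min_attained g 0 T ltac:(lra) (fun k c _ => g_continuous c k)
              (Z.to_nat (J - 1)) 0) as [jm [tm [_ [_ Hmin]]]].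
  destruct (finite_block_min_attained (fun s k => - g s k) 0 T ltac:(lra)
              (fun k c _ => continuity_pt_opp _ _ (g_continuous c k))
              (Z.to_nat (J - 1)) 0) as [jM [tM [_ [_ Hmax]]]].
  exists tm, jm, tM, jM. intros t j.
  destruct (periodic_reduce t j) as [t' [j' [Ht' [Hj' ->]]]].
  specialize (Hmax j' t' ltac:(lia) Ht'). specialize (Hmin j' t' ltac:(lia) Ht'). lra.
Qed.

End PeriodicBounds.

Section Fronts.
Variables (T : R) (J : Z) (dd : R -> Z -> R) (f : R -> Z -> R -> R)
  (lam : R -> R) (psi : R -> R -> Z -> R).
Hypothesis principal : principal_data T J dd f lam psi.

Lemma phi_of_pos mu c t j : 0 < phi_of lam psi mu c t j.
Proof.
  destruct (principal mu) as [Hpos _]. unfold phi_of.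
  apply Rmult_lt_0_compat; [apply exp_pos | apply Hpos].
Qed.

Lemma psi_continuous mu t j : continuity_pt (fun s => psi mu s j) t.
Proof.
  destruct (principal mu) as [_ [_ [_ [_ Hder]]]].
  apply derivable_continuous_pt. eexists.
  apply (derivable_pt_lim_ext (fun s => exp (- lam mu * s) * (exp (lam mu * s) * psi mu s j))).
  - intros s. rewrite <- Rmult_assoc, <- exp_plus.
    replace (- lam mu * s + lam mu * s) with 0 by ring. rewrite exp_0. ring.
  - apply derivable_pt_lim_mult; [apply derivable_pt_lim_exp_linear | apply Hder].
Qed.

Lemma psi_bounds (T_pos : 0 < T) (J_pos : (0 < J)%Z) mu :
  exists m M, 0 < m /\ forall t j, m <= psi mu t j <= M.
Proof.
  destruct (principal mu) as [Hpos [Hper_t [Hper_j _]]].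
  destruct (periodic_bounds_attained T J (psi mu) T_pos J_pos Hper_t Hper_j
              (psi_continuous mu)) as [tm [jm [tM [jM Hb]]]].
  exists (psi mu tm jm), (psi mu tM jM). split; [apply Hpos | exact Hb].
Qed.

Lemma derivable_pt_lim_phi_of mu c t j :
  derivable_pt_lim (fun s => phi_of lam psi mu c s j) t
    (diffusion dd t (phi_of lam psi mu c t) j
     + (f t j 0 + (mu * c - lam mu)) * phi_of lam psi mu c t j).
Proof.
  destruct (principal mu) as [_ [_ [_ [_ Hder]]]].
  set (a := mu * c - lam mu).
  apply (derivable_pt_lim_ext
           (fun s => exp (a * s) * (exp (- mu * IZR j) * (exp (lam mu * s) * psi mu s j)))).
  { intros s. unfold phi_of. rewrite <- !Rmult_assoc, <- !exp_plus. f_equal. f_equal.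
    unfold a; ring. }
  replace (diffusion dd t (phi_of lam psi mu c t) j + (f t j 0 + a) * phi_of lam psi mu c t j)
    with (a * exp (a * t) * (exp (- mu * IZR j) * (exp (lam mu * t) * psi mu t j))
          + exp (a * t) * (exp (- mu * IZR j)
              * rhsLin dd f mu t (fun k => exp (lam mu * t) * psi mu t k) j)).
  - apply (derivable_pt_lim_mult (fun s => exp (a * s))
             (fun s => exp (- mu * IZR j) * (exp (lam mu * s) * psi mu s j)));
      [apply derivable_pt_lim_exp_linear|].
    apply derivable_pt_lim_scal, Hder.
  - unfold rhsLin, diffusion, phi_of. rewrite plus_IZR, minus_IZR.
    replace (- mu * (IZR j + 1 - c * t)) with (- mu + - mu * (IZR j - c * t)) by ring.
    replace (- mu * (IZR j - 1 - c * t)) with (mu + - mu * (IZR j - c * t)) by ring.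
    replace (- mu * (IZR j - c * t)) with (a * t + - mu * IZR j + lam mu * t) by (unfold a; ring).
    rewrite !exp_plus. ring.
Qed.

Lemma phi_of_continuous_Rmax mu c t0 j :
  continuity_pt (fun s => phi_of lam psi mu c (Rmax t0 s) j) t0.
Proof.
  apply (continuity_pt_Rmax_of_continuous (fun s => phi_of lam psi mu c s j)); [lra|].
  apply derivable_continuous_pt. eexists. apply derivable_pt_lim_phi_of.
Qed.

Lemma front_sum_supersolution mu mu' c d d1 t0 :
  (forall t j x, 0 <= x -> f t j x <= f t j 0) ->
  mu * c = lam mu -> lam mu' <= mu' * c -> 0 <= d -> 0 <= d1 ->
  is_supersolution dd f t0
    (fun s k => d * phi_of lam psi mu c s k + d1 * phi_of lam psi mu' c s k).
Proof.
  intros Hf0 Hc Hc' Hd Hd1. split.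
  - intros k. exact (continuity_pt_plus _ _ _ (continuity_pt_scal _ d _ (phi_of_continuous_Rmax mu c t0 k))
                       (continuity_pt_scal _ d1 _ (phi_of_continuous_Rmax mu' c t0 k))).
  - intros k s _. eexists. split.
    { apply derivable_pt_lim_plus; apply derivable_pt_lim_scal, derivable_pt_lim_phi_of. }
    rewrite rhsE_diffusion. unfold diffusion.
    pose proof (phi_of_pos mu c s k). pose proof (phi_of_pos mu' c s k).
    set (U := d * phi_of lam psi mu c s k + d1 * phi_of lam psi mu' c s k).
    assert (HU : 0 <= U) by (unfold U; nra).
    assert (U * f s k U <= U * f s k 0) by (apply Rmult_le_compat_l, Hf0; exact HU).
    assert (0 <= d1 * ((mu' * c - lam mu') * phi_of lam psi mu' c s k)) by
      (apply Rmult_le_pos; [|apply Rmult_le_pos]; lra).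
    unfold U in *. rewrite Hc, Rminus_diag. nra.
Qed.

Lemma front_difference_subsolution mu mu' c d d1 t0 :
  mu * c = lam mu ->
  (forall s k, let V := d * phi_of lam psi mu c s k - d1 * phi_of lam psi mu' c s k in
     V * (f s k 0 - f s k V) <= d1 * (mu' * c - lam mu') * phi_of lam psi mu' c s k) ->
  is_subsolution dd f t0
    (fun s k => d * phi_of lam psi mu c s k - d1 * phi_of lam psi mu' c s k).
Proof.
  intros Hc Hreact. split.
  - intros k. exact (continuity_pt_minus _ _ _ (continuity_pt_scal _ d _ (phi_of_continuous_Rmax mu c t0 k))
                       (continuity_pt_scal _ d1 _ (phi_of_continuous_Rmax mu' c t0 k))).
  - intros k s _. eexists. split.
    { apply derivable_pt_lim_minus; apply derivable_pt_lim_scal, derivable_pt_lim_phi_of. }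
    rewrite rhsE_diffusion. specialize (Hreact s k). simpl in Hreact.
    unfold diffusion. rewrite Hc, Rminus_diag. lra.
Qed.

End Fronts.

Lemma front_difference_bounds d d1 mu mu' x a b M1 m2 L kk :
  0 < d <= 2 -> 0 < mu < mu' -> mu' < 2 * mu -> 0 < a <= M1 -> 0 < m2 <= b ->
  0 < kk -> 0 <= L -> M1 / m2 <= d1 / d -> 2 * L * M1 ^ 2 / (kk * m2) <= d1 / d ->
  0 < d * (exp (- mu * x) * a) - d1 * (exp (- mu' * x) * b) ->
  d * (exp (- mu * x) * a) - d1 * (exp (- mu' * x) * b) <= 2 * M1 /\
  L * (d * (exp (- mu * x) * a) - d1 * (exp (- mu' * x) * b)) ^ 2
    <= d1 * kk * (exp (- mu' * x) * b).
Proof.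
  intros Hd Hmu Hmu2 Ha Hb Hkk HL Hd1a Hd1b.
  apply Rmult_le_of_le_div in Hd1a, Hd1b; [|lra..].
  set (E := exp (- mu * x)). set (E1 := exp (- mu' * x)).
  set (V := d * (E * a) - d1 * (E1 * b)). intros HV.
  pose proof (exp_pos (- mu * x)) as HE. pose proof (exp_pos (- mu' * x)) as HE1.
  fold E in HE. fold E1 in HE1.
  assert (Hd1 : 0 <= d1) by (apply Rle_trans with (M1 / m2 * d); [|exact Hd1a];
                        apply Rmult_le_pos; [apply Rmult_le_pos; [|left; apply Rinv_0_lt_compat] |]; lra).
  assert (Hd1b' : M1 * d <= d1 * b).
  { apply Rle_trans with (d1 * m2); [|apply Rmult_le_compat_l; nra].
    replace (M1 * d) with (M1 / m2 * d * m2) by (field; lra).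
    apply Rmult_le_compat_r; lra. }
  assert (Hx : 0 < x).
  { destruct (Rle_lt_dec x 0) as [Hx|]; [exfalso|assumption].
    assert (E <= E1) by (apply exp_le_compat; nra).
    assert (d * a * E <= d * a * E1) by (apply Rmult_le_compat_l; nra).
    assert (V <= E1 * (d * a - d1 * b)) by (unfold V; lra).
    assert (d * a - d1 * b <= 0) by nra. nra. }
  assert (HE1' : E <= 1) by (rewrite <- exp_0; apply exp_le_compat; nra).
  assert (HEE : E * E <= E1).
  { unfold E, E1. rewrite <- exp_plus. apply exp_le_compat.
    assert (0 < (2 * mu - mu') * x) by (apply Rmult_lt_0_compat; lra). lra. }
  assert (HVa : V <= d * E * a).
  { assert (0 <= d1 * (E1 * b)) by (apply Rmult_le_pos; nra). unfold V; lra. }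
  assert (HEa : E * a <= M1) by nra.
  split; [nra|].
  assert (HV2 : V ^ 2 <= 2 * d * M1 ^ 2 * E1).
  { apply Rle_trans with ((d * E * a) ^ 2); [nra|].
    replace ((d * E * a) ^ 2) with (d * d * (a * a) * (E * E)) by ring.
    assert (a * a <= M1 * M1) by nra.
    assert (d * d * (a * a) <= d * d * (M1 * M1)) by (apply Rmult_le_compat_l; nra).
    assert (0 <= 2 * d - d * d) by nra. assert (0 <= M1 ^ 2 * E1) by nra.
    apply Rle_trans with (d * d * (M1 * M1) * E1); [apply Rmult_le_compat; nra | nra]. }
  assert (HLd : 2 * L * M1 ^ 2 * d <= d1 * kk * m2).
  { replace (2 * L * M1 ^ 2 * d) with (2 * L * M1 ^ 2 / (kk * m2) * d * (kk * m2))
      by (field; lra).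
    replace (d1 * kk * m2) with (d1 * (kk * m2)) by ring.
    apply Rmult_le_compat_r; nra. }
  apply Rle_trans with (L * (2 * d * M1 ^ 2 * E1)); [apply Rmult_le_compat_l; lra|].
  assert (d1 * kk * m2 <= d1 * kk * b) by (apply Rmult_le_compat_l; nra).
  nra.
Qed.

Lemma front_difference_reaction T J dd f lam psi mu mu' c d d1 M1 m2 L :
  principal_data T J dd f lam psi ->
  (forall t j x, x <= 0 -> f t j x = f t j 0) ->
  (forall t j u v, Rabs u <= 2 * M1 -> Rabs v <= 2 * M1 ->
     Rabs (f t j u - f t j v) <= L * Rabs (u - v)) ->
  0 < d <= 2 -> 0 < mu < mu' -> mu' < 2 * mu -> 0 < mu' * c - lam mu' ->
  (forall t j, psi mu t j <= M1) -> (forall t j, m2 <= psi mu' t j) -> 0 < m2 ->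
  M1 / m2 <= d1 / d -> 2 * Rabs L * M1 ^ 2 / ((mu' * c - lam mu') * m2) <= d1 / d ->
  forall s k, let V := d * phi_of lam psi mu c s k - d1 * phi_of lam psi mu' c s k in
    V <= 2 * M1 /\
    V * (f s k 0 - f s k V) <= d1 * (mu' * c - lam mu') * phi_of lam psi mu' c s k.
Proof.
  intros Hpr Hflat HL Hd Hmu Hmu2 Hkk HM1 Hm2 Hm2pos Hd1a Hd1b s k V.
  pose proof (phi_of_pos T J dd f lam psi Hpr mu' c s k) as Hphi1.
  assert (Hpsi : 0 < psi mu s k) by (destruct (Hpr mu) as [Hpos _]; apply Hpos).
  assert (Hd1 : 0 <= d1).
  { apply Rle_trans with (M1 / m2 * d); [|apply Rmult_le_of_le_div; lra].
    specialize (HM1 s k). apply Rmult_le_pos; [apply Rmult_le_pos|]; 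
      [| left; apply Rinv_0_lt_compat |]; lra. }
  assert (Hrhs : 0 <= d1 * (mu' * c - lam mu') * phi_of lam psi mu' c s k)
    by (apply Rmult_le_pos; [apply Rmult_le_pos|]; lra).
  destruct (Rle_lt_dec V 0) as [HV|HV].
  { specialize (HM1 s k). rewrite (Hflat s k V HV). split; [lra|].
    rewrite Rminus_diag, Rmult_0_r. exact Hrhs. }
  destruct (front_difference_bounds d d1 mu mu' (IZR k - c * s) (psi mu s k) (psi mu' s k)
              M1 m2 (Rabs L) (mu' * c - lam mu') Hd Hmu Hmu2 (conj Hpsi (HM1 s k))
              (conj Hm2pos (Hm2 s k)) Hkk (Rabs_pos L) Hd1a Hd1b HV) as [HV1 HV2].
  change (V <= 2 * M1) in HV1.
  change (Rabs L * V ^ 2 <= d1 * (mu' * c - lam mu') * phi_of lam psi mu' c s k) in HV2.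
  split; [exact HV1|].
  specialize (HL s k V 0 ltac:(rewrite Rabs_right; lra) ltac:(rewrite Rabs_R0; lra)).
  rewrite Rminus_0_r, (Rabs_right V) in HL by lra.
  pose proof (Rle_abs (f s k 0 - f s k V)) as Hab. rewrite Rabs_minus_sym in Hab.
  assert (L * V <= Rabs L * V) by (apply Rmult_le_compat_r; [lra | apply Rle_abs]).
  assert (f s k 0 - f s k V <= Rabs L * V) by lra.
  assert (V * (f s k 0 - f s k V) <= V * (Rabs L * V)) by (apply Rmult_le_compat_l; lra).
  nra.
Qed.

Section SolutionBetweenFronts.
Variables (T : R) (J : Z) (dd : R -> Z -> R) (f : R -> Z -> R -> R)
  (lam : R -> R) (psi : R -> R -> Z -> R) (Dmax A mu mu' c d d1 t0 : R).
Hypothesis principal : principal_data T J dd f lam psi.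
Hypothesis dd_bounds : forall t j, 0 <= dd t j <= Dmax.
Hypothesis A_nonneg : 0 <= A.
Hypothesis reaction_osl :
  forall t j x y, x <= y -> y * f t j y - x * f t j x <= A * (y - x).
Hypothesis speed : mu * c = lam mu.

Lemma solution_le_front_sum u0 u :
  (forall t j x, 0 <= x -> f t j x <= f t j 0) -> lam mu' <= mu' * c ->
  0 <= d -> 0 <= d1 -> is_solution dd f t0 u0 u ->
  (forall j, u0 j <= d * phi_of lam psi mu c t0 j + d1 * phi_of lam psi mu' c t0 j) ->
  forall t j, t0 <= t -> u t j <= d * phi_of lam psi mu c t j + d1 * phi_of lam psi mu' c t j.
Proof.
  intros Hf0 Hc' Hd Hd1 Hsol Hu0.
  destruct (is_solution_super_sub dd f t0 u0 u Hsol) as [_ Husub].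
  apply (super_sub_comparison dd Dmax f A dd_bounds A_nonneg reaction_osl t0 _ u
           (front_sum_supersolution T J dd f lam psi principal mu mu' c d d1 t0 Hf0 speed Hc' Hd Hd1)
           Husub).
  - intros k. destruct Hsol as [Hinit _]. rewrite Hinit. apply Hu0.
  - intros T1. destruct (is_solution_locally_bounded dd f t0 u0 u Hsol T1) as [B HB].
    exists B. intros s k Hs. specialize (HB s k Hs).
    pose proof (phi_of_pos T J dd f lam psi principal mu c s k).
    pose proof (phi_of_pos T J dd f lam psi principal mu' c s k).
    pose proof (Rle_abs (u s k)). nra.
Qed.

Lemma solution_ge_front_difference u0 u M :
  (forall s k, let V := d * phi_of lam psi mu c s k - d1 * phi_of lam psi mu' c s k in
     V <= M /\ V * (f s k 0 - f s k V) <= d1 * (mu' * c - lam mu') * phi_of lam psi mu' c s k) ->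
  is_solution dd f t0 u0 u ->
  (forall j, u0 j >= d * phi_of lam psi mu c t0 j - d1 * phi_of lam psi mu' c t0 j) ->
  forall t j, t0 <= t -> u t j >= d * phi_of lam psi mu c t j - d1 * phi_of lam psi mu' c t j.
Proof.
  intros Hfront Hsol Hu0 t j Ht. apply Rle_ge.
  destruct (is_solution_super_sub dd f t0 u0 u Hsol) as [Husup _].
  apply (super_sub_comparison dd Dmax f A dd_bounds A_nonneg reaction_osl t0 u _ Husup
           (front_difference_subsolution T J dd f lam psi principal mu mu' c d d1 t0 speed
              (fun s k => proj2 (Hfront s k)))); [| | exact Ht].
  - intros k. destruct Hsol as [Hinit _]. rewrite Hinit. apply Rge_le, Hu0.
  - intros T1. destruct (is_solution_locally_bounded dd f t0 u0 u Hsol T1) as [B HB].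
    exists (B + M). intros s k Hs. specialize (HB s k Hs).
    destruct (Hfront s k) as [HV _].
    pose proof (Rle_abs (- u s k)). rewrite Rabs_Ropp in *. lra.
Qed.

End SolutionBetweenFronts.

Lemma periodic_setting_reaction T J dd f : periodic_setting T J dd f ->
  (forall t j x, x <= 0 -> f t j x = f t j 0) /\
  (forall t j x, 0 <= x -> f t j x <= f t j 0) /\
  (exists A, 0 <= A /\ forall t j x y, x <= y -> y * f t j y - x * f t j x <= A * (y - x)).
Proof.
  intros (_ & _ & _ & _ & _ & _ & _ & _ & _ & Hlip & (fu & Hfu & _ & Hfu_neg) & Hflat
          & (M0 & HM0 & HfM0) & _).
  split; [exact Hflat|]. split.
  - intros t j x [Hx | <-]; [apply (reaction_le_at_zero f fu Hlip Hfu Hfu_neg); exact Hx | lra].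
  - destruct (reaction_upper_bound f fu Hlip Hfu Hfu_neg Hflat M0 HM0 HfM0) as [A [HA HfA]].
    exists A. split; [exact HA|]. intros t j x y.
    exact (reaction_one_sided_lipschitz f fu Hlip Hfu Hfu_neg Hflat A t j x y (HfA t j)).
Qed.

Lemma periodic_setting_diffusion_bounds T J dd f : periodic_setting T J dd f ->
  exists Dmax, forall t j, 0 <= dd t j <= Dmax.
Proof.
  intros (_ & _ & (Dmax & HDmax) & (dmin & Hdmin & Hddmin) & _).
  exists Dmax. intros t j. specialize (Hddmin t j). specialize (HDmax t j). lra.
Qed.

Lemma growth_rate_gap (lam : R -> R) mu mu' c :
  0 < mu' -> c = lam mu / mu -> lam mu' / mu' < lam mu / mu -> 0 < mu' * c - lam mu'.
Proof.
  intros Hmu' -> Hgap.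
  replace (lam mu') with (lam mu' / mu' * mu') by (field; lra). nra.
Qed.

Theorem proposition3p4
  (T : R) (J : Z) (dd : R -> Z -> R) (f : R -> Z -> R -> R)
  (lam : R -> R) (psi : R -> R -> Z -> R)
  (mustar c mu mu' : R)
  (Hset : periodic_setting T J dd f)
  (Hpr : principal_data T J dd f lam psi)
  (Hmustar : 0 < mustar /\ forall m, 0 < m -> lam mustar / mustar <= lam m / m)
  (Hc : lam mustar / mustar < c)
  (Hmu : 0 < mu /\ mu < mu' /\ mu' < Rmin (2 * mu) mustar)
  (Hcmu : c = lam mu / mu)
  (Hord : lam mu / mu > lam mu' / mu' /\ lam mu' / mu' > lam mustar / mustar)
  (d : R) (t0 : R) (Hd : 0 < d <= 2) :
  exists K : R, forall d1 : R, K <= d1 / d ->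
    forall u0 : Z -> R, linf_plus u0 ->
    forall u : R -> Z -> R, is_solution dd f t0 u0 u ->
      ((forall j, u0 j <= d * phi_of lam psi mu c t0 j + d1 * phi_of lam psi mu' c t0 j) ->
         forall t j, t0 <= t -> u t j <= d * phi_of lam psi mu c t j + d1 * phi_of lam psi mu' c t j) /\
      ((forall j, u0 j >= d * phi_of lam psi mu c t0 j - d1 * phi_of lam psi mu' c t0 j) ->
         forall t j, t0 <= t -> u t j >= d * phi_of lam psi mu c t j - d1 * phi_of lam psi mu' c t j).
Proof.
  destruct (periodic_setting_reaction T J dd f Hset) as (Hflat & Hf0 & A & HA & Hosl).
  destruct (periodic_setting_diffusion_bounds T J dd f Hset) as [Dmax Hdd].
  destruct Hset as (HT & HJ & _ & _ & _ & _ & _ & _ & _ & Hlip & _).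
  destruct Hmu as (Hmu & Hmumu' & Hmu'min).
  assert (Hmu2 : mu' < 2 * mu) by (eapply Rlt_le_trans; [exact Hmu'min | apply Rmin_l]).
  assert (Hspeed : mu * c = lam mu) by (rewrite Hcmu; field; lra).
  assert (Hkk : 0 < mu' * c - lam mu') by (apply growth_rate_gap with mu; lra).
  destruct (psi_bounds T J dd f lam psi Hpr HT HJ mu) as (m1 & M1 & Hm1 & HM1).
  destruct (psi_bounds T J dd f lam psi Hpr HT HJ mu') as (m2 & M2 & Hm2 & HM2).
  destruct (Hlip (2 * M1)) as [L HL].
  set (K1 := M1 / m2). set (K2 := 2 * Rabs L * M1 ^ 2 / ((mu' * c - lam mu') * m2)).
  exists (Rmax K1 K2). intros d1 HK u0 _ u Hsol.
  assert (HK1 : K1 <= d1 / d) by (eapply Rle_trans; [apply Rmax_l | exact HK]).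
  assert (HK2 : K2 <= d1 / d) by (eapply Rle_trans; [apply Rmax_r | exact HK]).
  split.
  - apply (solution_le_front_sum T J dd f lam psi Dmax A mu mu' c d d1 t0 Hpr Hdd HA Hosl
             Hspeed u0 u Hf0); [lra | lra | | exact Hsol].
    apply Rle_trans with (K1 * d); [|apply Rmult_le_of_le_div; lra].
    destruct (HM1 0 0%Z). unfold K1. apply Rmult_le_pos; [apply Rmult_le_pos|];
      [|left; apply Rinv_0_lt_compat|]; lra.
  - apply (solution_ge_front_difference T J dd f lam psi Dmax A mu mu' c d d1 t0 Hpr Hdd HA
             Hosl Hspeed u0 u (2 * M1)); [|exact Hsol].
    exact (front_difference_reaction T J dd f lam psi mu mu' c d d1 M1 m2 L Hpr Hflat HL Hd
             (conj Hmu Hmumu') Hmu2 Hkk (fun t j => proj2 (HM1 t j)) (fun t j => proj1 (HM2 t j))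
             Hm2 HK1 HK2).
Qed.
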